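(* Let $f$ be a critically coalescing quadratic rational map with critical points $c_1,c_2$. Then $\mathrm{Deck}(f^2)\cong V_4$, and the three special pairs of $\mathrm{Deck}(f^2)$ are exactly $\mathcal{C}_f=\{c_1,c_2\}$, $f^{-1}(c_1)$ and $f^{-1}(c_2)$.
   Context: A quadratic rational map with critical values $v_1\neq v_2$ is critically coalescing if $f(v_1)=f(v_2)$. $\mathrm{Deck}(F)=\{\tau \text{ Möbius} : F\circ\tau=F\}$. For a group $G\cong V_4$ (Klein four-group) of Möbius transformations, each of its three non-identity elements is an involution with exactly two fixed points in $\hat{\mathbb{C}}$; these three pairs of fixed points (six points in total) are called the special pairs of $G$. *)

From HB Require Import structures.
From mathcomp Require Import all_boot all_order all_algebra.
From mathcomp Require Import complex reals.
Set Implicit Arguments. Unset Strict Implicit. Unset Printing Implicit Defensive.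
Import Order.TTheory GRing.Theory Num.Theory.
Local Open Scope ring_scope.

Section Sphere.
Variable R : realType.
Local Notation C := R[i].

(* The Riemann sphere: [Some z] is the finite point z, [None] is infinity. *)
Definition sphere := option C.

Definition hom (p : sphere) : C * C :=
  match p with Some z => (z, 1) | None => (1, 0) end.

Definition proj (uv : C * C) : sphere :=
  if uv.2 == 0 then None else Some (uv.1 / uv.2).

(* A quadratic rational map given by its homogeneous lift
   F(x,y) = (a2 x^2 + a1 x y + a0 y^2, b2 x^2 + b1 x y + b0 y^2). *)
Record qrat := QRat { qa0 : C; qa1 : C; qa2 : C; qb0 : C; qb1 : C; qb2 : C }.

Definition qlift (F : qrat) (xy : C * C) : C * C :=
  let: (x, y) := xy in
  (qa2 F * x ^+ 2 + qa1 F * x * y + qa0 F * y ^+ 2,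
   qb2 F * x ^+ 2 + qb1 F * x * y + qb0 F * y ^+ 2).

(* The two forms have no common zero on P^1, i.e. F has degree exactly 2. *)
Definition is_quadratic (F : qrat) : Prop :=
  forall p : sphere, qlift F (hom p) <> (0, 0).

Definition qmap (F : qrat) (p : sphere) : sphere := proj (qlift F (hom p)).

(* Jacobian determinant of the homogeneous lift at (x,y). *)
Definition qjac (F : qrat) (xy : C * C) : C :=
  let: (x, y) := xy in
  (2%:R * qa2 F * x + qa1 F * y) * (qb1 F * x + 2%:R * qb0 F * y)
  - (qa1 F * x + 2%:R * qa0 F * y) * (2%:R * qb2 F * x + qb1 F * y).

Definition is_critical (F : qrat) (p : sphere) : Prop := qjac F (hom p) = 0.

Definition mobius_act (a b c d : C) (p : sphere) : sphere :=
  let: (x, y) := hom p in proj (a * x + b * y, c * x + d * y).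

Definition is_mobius (g : sphere -> sphere) : Prop :=
  exists a b c d : C, a * d - b * c != 0 /\ forall p, g p = mobius_act a b c d p.

Definition Deck (f : sphere -> sphere) (tau : sphere -> sphere) : Prop :=
  is_mobius tau /\ forall p, f (tau p) = f p.

End Sphere.

From Pilot Require Import Defs.
From HB Require Import structures.
From mathcomp Require Import all_boot all_order all_algebra.
From mathcomp Require Import complex reals.
From mathcomp Require Import ring.
Import Order.TTheory GRing.Theory Num.Theory.
Local Open Scope ring_scope.
Set Implicit Arguments. Unset Strict Implicit. Unset Printing Implicit Defensive.

(* Conjugate by the matrix M whose columns represent c2 and c1.  As c1, c2 are the
   critical points, the polarisation of the quadratic lift F vanishes on (c2, c1), so
   up to scalars F = A o sq o M^-1, where sq squares both homogeneous coordinates and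
   A has columns F(c2), F(c1).  Hence F o F = A o sq o Q o sq o M^-1 with Q = M^-1 A,
   and f^2(c1) = f^2(c2) forces Q to have the shape [[a, -ra], [c, rc]].  In the
   affine coordinate z of M^-1 the map sq o Q o sq is z |-> (a/c)^2 ((z^2-r)/(z^2+r))^2,
   whose fibres are the orbits of {z, -z, r/z, -r/z}; so det2 (F^2 y) (F^2 x) factors
   into four bilinear factors, one per element of this Klein group.  A Moebius deck
   transformation kills this product along its graph, and since a product of
   polynomials vanishing everywhere has a zero factor, it is one of the four conjugated
   maps.  Their fixed points are z = 0, oo (that is c1, c2), z^2 = r and z^2 = -r
   (the preimages of c1 and of c2). *)

(** * Homogeneous coordinates *)

Section Homogeneous.
Variable R : realType.
Local Notation C := R[i].
Local Notation sphere := (sphere R).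
Local Notation hom := Defs.hom.
Local Notation proj := Defs.proj.
Implicit Types (F : qrat R) (p q : sphere) (u v w : C * C) (k l : C).

Definition det2 (u v : C * C) : C := u.1 * v.2 - u.2 * v.1.
Definition scale2 (l : C) (u : C * C) : C * C := (l * u.1, l * u.2).

Lemma pair_neq0 (u : C * C) : (u != (0, 0)) = (u.1 != 0) || (u.2 != 0).
Proof. by case: u => u1 u2; rewrite xpair_eqE negb_and. Qed.

Lemma hom_neq0 (p : sphere) : hom p != (0, 0).
Proof. by case: p => [z|]; rewrite pair_neq0 oner_eq0 ?orbT. Qed.

Lemma scale2_neq0 l u : l != 0 -> u != (0, 0) -> scale2 l u != (0, 0).
Proof. by move=> l0; rewrite !pair_neq0 /= !mulf_eq0 (negbTE l0). Qed.

Lemma det2C u v : det2 u v = - det2 v u.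
Proof. by rewrite /det2; ring. Qed.

Lemma det2_scale2l l u v : det2 (scale2 l u) v = l * det2 u v.
Proof. by rewrite /det2 /=; ring. Qed.

Lemma scale2A k l u : scale2 k (scale2 l u) = scale2 (k * l) u.
Proof. by rewrite /scale2 /=; congr pair; ring. Qed.

Lemma scaled_eq0 k l (a b : C) : k != 0 -> l != 0 -> k * a = l * b -> a = 0 <-> b = 0.
Proof.
move=> k0 l0 e; split=> [a0|b0]; apply/eqP.
  by move: e; rewrite a0 mulr0 => /esym/eqP; rewrite mulf_eq0 (negbTE l0).
by move: e; rewrite b0 mulr0 => /eqP; rewrite mulf_eq0 (negbTE k0).
Qed.

Lemma det2_scale2 a b u v : det2 (scale2 a u) (scale2 b v) = a * b * det2 u v.
Proof. by rewrite /det2 /=; ring. Qed.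

Lemma proj_hom (p : sphere) : proj (hom p) = p.
Proof. by case: p => [z|]; rewrite /proj /= ?oner_eq0 ?eqxx ?divr1. Qed.

Lemma proj_scale2 l u : l != 0 -> proj (scale2 l u) = proj u.
Proof.
case: u => u1 u2 l0; rewrite /proj /= mulf_eq0 (negbTE l0) /=.
by case: eqP => // /eqP u20; congr Some; field; rewrite u20 l0.
Qed.

Lemma hom_proj u : u != (0, 0) -> exists2 l, l != 0 & hom (proj u) = scale2 l u.
Proof.
case: u => u1 u2; rewrite pair_neq0 /proj /scale2 /=.
have [-> /=|u20 _] := eqVneq u2 0.
  by rewrite orbF => u10; exists u1^-1; rewrite ?invr_eq0 // mulVf // mulr0.
by exists u2^-1; rewrite ?invr_eq0 // mulVf // mulrC.
Qed.

Lemma eq_hom (p q : sphere) : p = q <-> det2 (hom p) (hom q) = 0.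
Proof.
case: p q => [z|] [w|]; rewrite /det2 /= ?mul1r ?mulr1 ?mulr0 ?mul0r ?subr0 ?sub0r;
  split=> //; try by move/eqP; rewrite ?oppr_eq0 oner_eq0.
- by case=> ->; rewrite subrr.
- by move/eqP; rewrite subr_eq0 => /eqP ->.
Qed.

Lemma eq_proj u v : u != (0, 0) -> v != (0, 0) ->
  proj u = proj v <-> det2 u v = 0.
Proof.
move=> /hom_proj[k k0 hu] /hom_proj[l l0 hv].
rewrite eq_hom hu hv det2_scale2; split=> [/eqP|->]; last by rewrite mulr0.
by rewrite !mulf_eq0 (negbTE k0) (negbTE l0) => /eqP.
Qed.

Lemma sphere_avoid2 (a b : sphere) : exists p, p <> a /\ p <> b.
Proof.
have succ_neq (z : C) : Some (z + 1) <> Some z.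
  by move=> [] /eqP; rewrite -[X in _ == X]addr0 (inj_eq (addrI z)) oner_eq0.
case: a b => [z|] [w|]; first by exists None.
- by exists (Some (z + 1)).
- by exists (Some (w + 1)).
- by exists (Some 0).
Qed.

(* The differential of [qlift F] at [u], applied to [v]. *)
Definition qpolar (F : qrat R) (u v : C * C) : C * C :=
  (2%:R * qa2 F * u.1 * v.1 + qa1 F * (u.1 * v.2 + u.2 * v.1) + 2%:R * qa0 F * u.2 * v.2,
   2%:R * qb2 F * u.1 * v.1 + qb1 F * (u.1 * v.2 + u.2 * v.1) + 2%:R * qb0 F * u.2 * v.2).

Lemma qpolarC F u v : qpolar F u v = qpolar F v u.
Proof. by rewrite /qpolar; congr pair; ring. Qed.

Lemma qlift_scale2 F l u : qlift F (scale2 l u) = scale2 (l ^+ 2) (qlift F u).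
Proof. by case: u => u1 u2; rewrite /qlift /scale2 /=; congr pair; ring. Qed.

Lemma qlift_neq0 F u : is_quadratic F -> u != (0, 0) -> qlift F u != (0, 0).
Proof.
move=> Fq /hom_proj[l l0 hu]; apply/eqP => Fu0; apply: (Fq (proj u)).
by rewrite hu qlift_scale2 Fu0 /scale2 /= mulr0.
Qed.

Lemma qmap_proj F u : u != (0, 0) -> qmap F (proj u) = proj (qlift F u).
Proof.
by move=> /hom_proj[l l0 hu]; rewrite /qmap hu qlift_scale2 proj_scale2 // expf_neq0.
Qed.

Lemma qmap_qmap F p : is_quadratic F ->
  qmap F (qmap F p) = proj (qlift F (qlift F (hom p))).
Proof. by move=> Fq; rewrite {2}/qmap qmap_proj // qlift_neq0 // hom_neq0. Qed.

Lemma qjac_det2 F u v : qjac F u * det2 u v = 2%:R * det2 (qlift F u) (qpolar F u v).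
Proof. by case: u v => u1 u2 [v1 v2]; rewrite /qjac /qlift /qpolar /det2 /=; ring. Qed.

Lemma det2_indep_eq0 a b u : det2 a b != 0 -> det2 a u = 0 -> det2 b u = 0 -> u = (0, 0).
Proof.
case: a b u => a1 a2 [b1 b2] [u1 u2]; rewrite /det2 /= => ab0 au bu.
have e1 : (a1 * b2 - a2 * b1) * u1 = b1 * (a1 * u2 - a2 * u1) - a1 * (b1 * u2 - b2 * u1).
  by ring.
have e2 : (a1 * b2 - a2 * b1) * u2 = b2 * (a1 * u2 - a2 * u1) - a2 * (b1 * u2 - b2 * u1).
  by ring.
rewrite au bu !mulr0 subr0 in e1 e2.
by move: e1 e2 => /eqP + /eqP; rewrite !mulf_eq0 (negbTE ab0) /= => /eqP -> /eqP ->.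
Qed.

(** * Moebius transformations as 2x2 matrices *)

Definition mx2 := ((C * C) * (C * C))%type.
Implicit Types (m n A : mx2) (r : C).

Definition mx2_1 : mx2 := ((1, 0), (0, 1)).
Definition mx2_cols (u v : C * C) : mx2 := ((u.1, v.1), (u.2, v.2)).
Definition mx2_act (m : mx2) (u : C * C) : C * C :=
  (m.1.1 * u.1 + m.1.2 * u.2, m.2.1 * u.1 + m.2.2 * u.2).
Definition mx2_det (m : mx2) : C := m.1.1 * m.2.2 - m.1.2 * m.2.1.
Definition mx2_mul (m n : mx2) : mx2 :=
  ((m.1.1 * n.1.1 + m.1.2 * n.2.1, m.1.1 * n.1.2 + m.1.2 * n.2.2),
   (m.2.1 * n.1.1 + m.2.2 * n.2.1, m.2.1 * n.1.2 + m.2.2 * n.2.2)).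
Definition mx2_adj (m : mx2) : mx2 := ((m.2.2, - m.1.2), (- m.2.1, m.1.1)).
Definition mx2_conj (m n : mx2) : mx2 := mx2_mul m (mx2_mul n (mx2_adj m)).
Definition mob (m : mx2) (p : sphere) : sphere := proj (mx2_act m (hom p)).

Lemma mx2_det_cols u v : mx2_det (mx2_cols u v) = det2 u v.
Proof. by rewrite /mx2_det /det2 /=; ring. Qed.

Lemma mx2_act_adj_cols u v w : mx2_act (mx2_adj (mx2_cols u v)) w = (det2 w v, - det2 w u).
Proof. by rewrite /mx2_act /det2 /=; congr pair; ring. Qed.

Lemma mobius_actE a b c d : mobius_act a b c d =1 mob ((a, b), (c, d)).
Proof. by move=> p; rewrite /mobius_act /mob; case: (hom p). Qed.

Lemma mx2_act_scale2 m l u : mx2_act m (scale2 l u) = scale2 l (mx2_act m u).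
Proof. by rewrite /mx2_act /scale2 /=; congr pair; ring. Qed.

Lemma mx2_actM m n u : mx2_act (mx2_mul m n) u = mx2_act m (mx2_act n u).
Proof. by rewrite /mx2_act /mx2_mul /=; congr pair; ring. Qed.

Lemma mx2_detM m n : mx2_det (mx2_mul m n) = mx2_det m * mx2_det n.
Proof. by rewrite /mx2_det /mx2_mul /=; ring. Qed.

Lemma mx2_det_adj m : mx2_det (mx2_adj m) = mx2_det m.
Proof. by rewrite /mx2_det /mx2_adj /=; ring. Qed.

Lemma mx2_det_conj m n : mx2_det (mx2_conj m n) = mx2_det m ^+ 2 * mx2_det n.
Proof. by rewrite /mx2_conj !mx2_detM mx2_det_adj; ring. Qed.

Lemma mx2_act_adj m u : mx2_act m (mx2_act (mx2_adj m) u) = scale2 (mx2_det m) u.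
Proof. by rewrite /mx2_act /mx2_adj /mx2_det /scale2 /=; congr pair; ring. Qed.

Lemma mx2_adj_act m u : mx2_act (mx2_adj m) (mx2_act m u) = scale2 (mx2_det m) u.
Proof. by rewrite /mx2_act /mx2_adj /mx2_det /scale2 /=; congr pair; ring. Qed.

Lemma det2_mx2_act m u v : det2 (mx2_act m u) (mx2_act m v) = mx2_det m * det2 u v.
Proof. by rewrite /det2 /mx2_act /mx2_det /=; ring. Qed.

Lemma det2_mx2_actr m u v : det2 u (mx2_act m v) = det2 (mx2_act (mx2_adj m) u) v.
Proof. by rewrite /det2 /mx2_act /mx2_adj /=; ring. Qed.

Lemma mx2_act_neq0 m u : mx2_det m != 0 -> u != (0, 0) -> mx2_act m u != (0, 0).
Proof.
move=> m0 u0; apply: contra_neq (scale2_neq0 m0 u0) => mu0.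
by rewrite -mx2_adj_act mu0 /mx2_act /= !mulr0 addr0.
Qed.

Lemma mob_proj m u : u != (0, 0) -> mob m (proj u) = proj (mx2_act m u).
Proof. by move=> /hom_proj[l l0 hu]; rewrite /mob hu mx2_act_scale2 proj_scale2. Qed.

Lemma mob_mob m n p : mx2_det n != 0 -> mob m (mob n p) = mob (mx2_mul m n) p.
Proof.
move=> n0; rewrite [mob n p]/mob mob_proj ?(mx2_act_neq0 n0 (hom_neq0 p)) //.
by rewrite /mob mx2_actM.
Qed.

Lemma mob_conj_mul m n n' p : mx2_det m != 0 -> mx2_det n' != 0 ->
  mob (mx2_conj m n) (mob (mx2_conj m n') p) = mob (mx2_conj m (mx2_mul n n')) p.
Proof.
move=> m0 n0; rewrite mob_mob ?mx2_det_conj ?mulf_neq0 ?expf_neq0 //.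
rewrite /mob /mx2_conj !mx2_actM mx2_adj_act mx2_act_scale2.
by rewrite !mx2_act_scale2 proj_scale2.
Qed.

Lemma mob_conj_scalar m k p : mx2_det m != 0 -> k != 0 ->
  mob (mx2_conj m ((k, 0), (0, k))) p = p.
Proof.
move=> m0 k0; rewrite /mob /mx2_conj !mx2_actM.
have -> u : mx2_act ((k, 0), (0, k)) u = scale2 k u.
  by rewrite /mx2_act /scale2 /=; congr pair; ring.
by rewrite mx2_act_scale2 mx2_act_adj !proj_scale2 ?proj_hom.
Qed.

Lemma det2_mx2_conj m n u v :
  det2 u (mx2_act (mx2_conj m n) v) =
  det2 (mx2_act (mx2_adj m) u) (mx2_act n (mx2_act (mx2_adj m) v)).
Proof. by rewrite /mx2_conj !mx2_actM det2_mx2_actr. Qed.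

Lemma det2_hom_mob m p : mx2_det m != 0 -> det2 (hom (mob m p)) (mx2_act m (hom p)) = 0.
Proof.
move=> m0; have [l _ ->] := hom_proj (mx2_act_neq0 m0 (hom_neq0 p)).
by rewrite det2_scale2l /det2; ring.
Qed.

Lemma is_mobiusP (tau : sphere -> sphere) :
  is_mobius tau <-> exists2 m, mx2_det m != 0 & tau =1 mob m.
Proof.
split=> [[a [b [c [d [ad tauE]]]]]|[[[a b] [c d]] m0 tauE]].
  by exists ((a, b), (c, d)) => // p; rewrite tauE mobius_actE.
by exists a, b, c, d; split=> // p; rewrite tauE mobius_actE.
Qed.

Lemma Deck_mob (f : sphere -> sphere) m tau : mx2_det m != 0 ->
  (forall p, f (mob m p) = f p) -> tau =1 mob m -> Deck f tau.
Proof.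
move=> m0 fm tauE; split=> [|p]; last by rewrite tauE fm.
by apply/is_mobiusP; exists m.
Qed.

Lemma mob_eq_of_det2 m n : mx2_det m != 0 -> mx2_det n != 0 ->
  (forall u, det2 (mx2_act m u) (mx2_act n u) = 0) -> mob m =1 mob n.
Proof. by move=> m0 n0 mn p; apply/eq_proj; rewrite ?mx2_act_neq0 ?hom_neq0. Qed.

Lemma mob_fixE m p : mx2_det m != 0 -> mob m p = p <-> det2 (hom p) (mx2_act m (hom p)) = 0.
Proof.
move=> m0; rewrite -{2}[p]proj_hom /mob eq_proj ?mx2_act_neq0 ?hom_neq0 // det2C.
by split=> [/eqP|->]; rewrite ?oppr0 // oppr_eq0 => /eqP.
Qed.

Lemma mob_conj_fixE m n p : mx2_det m != 0 -> mx2_det n != 0 ->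
  mob (mx2_conj m n) p = p <->
  det2 (mx2_act (mx2_adj m) (hom p)) (mx2_act n (mx2_act (mx2_adj m) (hom p))) = 0.
Proof.
by move=> m0 n0; rewrite mob_fixE ?mx2_det_conj ?mulf_neq0 ?expf_neq0 // det2_mx2_conj.
Qed.

(** * Binary quadratic forms and the coalescing normal form *)

Definition sq2 u : C * C := (u.1 ^+ 2, u.2 ^+ 2).

Lemma qlift_mx2_cols F u v w : qpolar F u v = (0, 0) ->
  qlift F (mx2_act (mx2_cols u v) w) = mx2_act (mx2_cols (qlift F u) (qlift F v)) (sq2 w).
Proof.
case: u v w => u1 u2 [v1 v2] [w1 w2] /pair_equal_spec[P1 P2].
rewrite /qpolar /= in P1 P2; rewrite /qlift /mx2_act /mx2_cols /sq2 /=; congr pair.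
  by rewrite -[RHS]addr0 -(mulr0 (w1 * w2)) -P1; ring.
by rewrite -[RHS]addr0 -(mulr0 (w1 * w2)) -P2; ring.
Qed.

Lemma poly_eq0_of_horner (P : {poly C}) : (forall z, P.[z] = 0) -> P = 0.
Proof.
move=> P0; apply: (@roots_geq_poly_eq0 _ P [seq i%:R | i <- iota 0 (size P)]).
- by apply/allP => z _; rewrite /root P0.
- by rewrite map_inj_uniq ?iota_uniq // => i j /eqP; rewrite eqr_nat => /eqP.
- by rewrite size_map size_iota.
Qed.

Definition det2_coefs m n : seq C :=
  [:: m.1.2 * n.2.2 - m.2.2 * n.1.2;
      m.1.1 * n.2.2 + m.1.2 * n.2.1 - m.2.1 * n.1.2 - m.2.2 * n.1.1;
      m.1.1 * n.2.1 - m.2.1 * n.1.1].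

Definition det2_poly m n : {poly C} := Poly (det2_coefs m n).

Lemma det2_mx2_act_coefs m n u : det2 (mx2_act m u) (mx2_act n u) =
  (det2_coefs m n)`_2 * u.1 ^+ 2 + (det2_coefs m n)`_1 * u.1 * u.2 +
  (det2_coefs m n)`_0 * u.2 ^+ 2.
Proof. by rewrite /det2 /mx2_act /=; ring. Qed.

Lemma horner_det2_poly m n z :
  (det2_poly m n).[z] = det2 (mx2_act m (z, 1)) (mx2_act n (z, 1)).
Proof. by rewrite horner_Poly det2_mx2_act_coefs /=; ring. Qed.

Lemma det2_poly_eq0 m n : det2_poly m n = 0 ->
  forall u, det2 (mx2_act m u) (mx2_act n u) = 0.
Proof.
move=> mn0 u; have cf0 i : (det2_coefs m n)`_i = 0.
  by rewrite -coef_Poly -/(det2_poly m n) mn0 coef0.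
by rewrite det2_mx2_act_coefs !cf0 !mul0r !addr0.
Qed.

(* In the affine coordinate z = u.1 / u.2: z |-> -z, z |-> r / z and z |-> - r / z. *)
Definition neg_mx : mx2 := ((-1, 0), (0, 1)).
Definition rinv_mx r : mx2 := ((0, r), (1, 0)).
Definition nrinv_mx r : mx2 := ((0, - r), (1, 0)).

Lemma mx2_1_unit : mx2_det mx2_1 != 0.
Proof. by rewrite /mx2_det /= mulr1 mulr0 subr0 oner_eq0. Qed.

Lemma neg_mx_unit : mx2_det neg_mx != 0.
Proof. by rewrite /mx2_det /= mulr1 mulr0 subr0 oppr_eq0 oner_eq0. Qed.

Lemma rinv_mx_unit r : r != 0 -> mx2_det (rinv_mx r) != 0.
Proof. by rewrite /mx2_det /= mul0r mulr1 sub0r oppr_eq0. Qed.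

Lemma nrinv_mx_unit r : r != 0 -> mx2_det (nrinv_mx r) != 0.
Proof. by rewrite /mx2_det /= mul0r mulr1 sub0r opprK. Qed.

Definition coalescing_mx a c r : mx2 := ((a, - (r * a)), (c, r * c)).

Lemma coalescing_mx_entries Q : mx2_det Q != 0 -> Q.1.2 * Q.2.1 + Q.1.1 * Q.2.2 = 0 ->
  [/\ Q.1.1 != 0, Q.1.2 != 0 & Q.2.1 != 0].
Proof.
case: Q => [[a b] [c d]]; rewrite /mx2_det /= => Q0 e.
have ad : a * d = - (b * c) by apply/eqP; rewrite -addr_eq0 addrC e.
have bc0 : b * c != 0.
  by apply: contraNneq Q0 => bc0; rewrite ad bc0 oppr0 addr0.
have ad0 : a * d != 0 by rewrite ad oppr_eq0.
by move: ad0 bc0; rewrite !mulf_eq0 !negb_or => /andP[-> _] /andP[-> ->].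
Qed.

Lemma coalescing_mxE Q : Q.1.1 != 0 -> Q.1.2 * Q.2.1 + Q.1.1 * Q.2.2 = 0 ->
  Q = coalescing_mx Q.1.1 Q.2.1 (- Q.1.2 / Q.1.1).
Proof.
case: Q => [[a b] [c d]] /= a0 e; rewrite /coalescing_mx /=.
have ad : a * d = - (b * c) by apply/eqP; rewrite -addr_eq0 addrC e.
congr (_, _); congr (_, _); first by field.
by apply: (mulfI a0); rewrite ad; field.
Qed.

Lemma det2_coalescing_iterate A a c r w u :
  let Q := coalescing_mx a c r in
  det2 (mx2_act A (sq2 (mx2_act Q (sq2 w)))) (mx2_act A (sq2 (mx2_act Q (sq2 u)))) =
  mx2_det A * (2%:R * r * a * c) * (2%:R * a * c) *
  (det2 w (mx2_act mx2_1 u) * det2 w (mx2_act neg_mx u) *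
   det2 w (mx2_act (rinv_mx r) u) * det2 w (mx2_act (nrinv_mx r) u)).
Proof. by case: w u => w1 w2 [u1 u2]; rewrite /det2 /mx2_act /mx2_det /sq2 /=; ring. Qed.

End Homogeneous.

Arguments mx2_1 {R}.
Arguments neg_mx {R}.

Lemma klein_four_distinct (T : Type) (s1 s2 s3 : T -> T) :
  involutive s1 -> involutive s2 -> (forall p, s1 (s2 p) = s3 p) ->
  (exists p, s1 p <> p) -> (exists p, s2 p <> p) -> (exists p, s3 p <> p) ->
  [/\ exists p, s1 p <> s2 p, exists p, s1 p <> s3 p & exists p, s2 p <> s3 p].
Proof.
move=> s1K s2K s12 [p1 n1] [p2 n2] [p3 n3]; split.
- by exists p3 => e; apply: n3; rewrite -s12 -e s1K.
- by exists p2 => e; apply: n2; rewrite -[s2 p2]s1K s12 -e s1K.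
- exists (s2 p1) => e; apply: n1.
  by rewrite s2K -s12 s2K in e; rewrite -e.
Qed.

(** * Critically coalescing quadratic maps *)

Section CriticallyCoalescing.
Variable R : realType.
Local Notation C := R[i].
Local Notation sphere := (sphere R).
Local Notation hom := Defs.hom.
Local Notation proj := Defs.proj.
Variables (F : qrat R) (c1 c2 : sphere).
Hypothesis F_quadratic : is_quadratic F.
Hypothesis F_critical : forall p, is_critical F p <-> p = c1 \/ p = c2.
Hypothesis F_c1_neq_c2 : qmap F c1 <> qmap F c2.
Hypothesis F2_c1_eq_c2 : qmap F (qmap F c1) = qmap F (qmap F c2).
Implicit Types (p q : sphere) (x y : C * C).

Local Notation F2 := (fun p => qmap F (qmap F p)).

Definition crit_mx := mx2_cols (hom c2) (hom c1).
Definition critval_mx := mx2_cols (qlift F (hom c2)) (qlift F (hom c1)).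
Definition normal_mx := mx2_mul (mx2_adj crit_mx) critval_mx.

Local Notation M := crit_mx.
Local Notation A := critval_mx.
Local Notation Q := normal_mx.
Local Notation adjM := (mx2_act (mx2_adj crit_mx)).

Lemma crit_mx_unit : mx2_det M != 0.
Proof.
rewrite mx2_det_cols; apply/eqP => /eq_hom c21.
by apply: F_c1_neq_c2; rewrite c21.
Qed.

Lemma critval_mx_unit : mx2_det A != 0.
Proof.
rewrite mx2_det_cols; apply/eqP => /eq_proj Fc21; apply: F_c1_neq_c2.
by rewrite /qmap Fc21 // qlift_neq0 // hom_neq0.
Qed.

Lemma qpolar_crit : qpolar F (hom c2) (hom c1) = (0, 0).
Proof.
have half_eq0 (z : C) : 0 = 2%:R * z -> z = 0.
  by move/esym/eqP; rewrite mulf_eq0 pnatr_eq0 => /eqP.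
apply: (det2_indep_eq0 (a := qlift F (hom c2)) (b := qlift F (hom c1))).
- by rewrite -mx2_det_cols critval_mx_unit.
- apply: half_eq0; rewrite -qjac_det2.
  have /F_critical -> : c2 = c1 \/ c2 = c2 by right.
  by rewrite mul0r.
- apply: half_eq0; rewrite qpolarC -qjac_det2.
  have /F_critical -> : c1 = c1 \/ c1 = c2 by left.
  by rewrite mul0r.
Qed.

Lemma qlift_normal x :
  scale2 (mx2_det M ^+ 2) (qlift F x) = mx2_act A (sq2 (adjM x)).
Proof. by rewrite -qlift_scale2 -mx2_act_adj qlift_mx2_cols // qpolar_crit. Qed.

Lemma qlift2_normal x :
  scale2 (mx2_det M ^+ 6) (qlift F (qlift F x)) =
  mx2_act A (sq2 (mx2_act Q (sq2 (adjM x)))).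
Proof.
have := qlift_normal (mx2_act A (sq2 (adjM x))).
rewrite -mx2_actM -/normal_mx -qlift_normal qlift_scale2 scale2A => <-.
by rewrite -exprM -exprD.
Qed.

Lemma normal_mx_coalescing : Q.1.2 * Q.2.1 + Q.1.1 * Q.2.2 = 0.
Proof.
have nz x : x != (0, 0) -> qlift F (qlift F x) != (0, 0).
  by move=> x0; rewrite !qlift_neq0.
move: F2_c1_eq_c2; rewrite !qmap_qmap // => /(eq_proj (nz _ (hom_neq0 _)) (nz _ (hom_neq0 _))).
move=> /(congr1 (fun z => mx2_det M ^+ 6 * mx2_det M ^+ 6 * z)).
rewrite -det2_scale2 !qlift2_normal det2_mx2_act mulr0.
have adj_c1 : adjM (hom c1) = (0, mx2_det M).
  by rewrite mx2_act_adj_cols mx2_det_cols /det2; congr pair; ring.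
have adj_c2 : adjM (hom c2) = (mx2_det M, 0).
  by rewrite mx2_act_adj_cols mx2_det_cols /det2; congr pair; ring.
have detQ : mx2_det Q = mx2_det M * mx2_det A by rewrite mx2_detM mx2_det_adj.
rewrite adj_c1 adj_c2.
have -> : det2 (sq2 (mx2_act Q (sq2 (0, mx2_det M)))) (sq2 (mx2_act Q (sq2 (mx2_det M, 0)))) =
    - (mx2_det M ^+ 8 * mx2_det Q) * (Q.1.2 * Q.2.1 + Q.1.1 * Q.2.2).
  by rewrite /det2 /sq2 /mx2_act /mx2_det /=; ring.
have K0 : mx2_det A * - (mx2_det M ^+ 8 * mx2_det Q) != 0.
  by rewrite detQ mulf_neq0 ?oppr_eq0 ?mulf_neq0 ?expf_neq0 ?crit_mx_unit ?critval_mx_unit.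
by move/eqP; rewrite mulrA mulf_eq0 (negbTE K0) => /eqP.
Qed.

Definition coalescing_param : C := - Q.1.2 / Q.1.1.
Local Notation r := coalescing_param.

Lemma normal_mx_entries : [/\ Q.1.1 != 0, Q.1.2 != 0 & Q.2.1 != 0].
Proof.
apply: coalescing_mx_entries normal_mx_coalescing.
by rewrite mx2_detM mx2_det_adj mulf_neq0 ?crit_mx_unit ?critval_mx_unit.
Qed.

Lemma normal_mxE : Q = coalescing_mx Q.1.1 Q.2.1 r.
Proof. by case: normal_mx_entries => Q11 _ _; exact: coalescing_mxE normal_mx_coalescing. Qed.

Lemma coalescing_param_neq0 : r != 0.
Proof.
case: normal_mx_entries => Q11 Q12 _.
by rewrite /coalescing_param mulf_neq0 ?oppr_eq0 ?invr_eq0.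
Qed.

Lemma conj_crit_unit N : mx2_det N != 0 -> mx2_det (mx2_conj M N) != 0.
Proof. by move=> N0; rewrite mx2_det_conj mulf_neq0 ?expf_neq0 ?crit_mx_unit. Qed.

Definition deck1 := mob (mx2_conj M neg_mx).
Definition deck2 := mob (mx2_conj M (rinv_mx r)).
Definition deck3 := mob (mx2_conj M (nrinv_mx r)).

Definition fiber_form x y : C :=
  det2 y (mx2_act (mx2_conj M mx2_1) x) * det2 y (mx2_act (mx2_conj M neg_mx) x) *
  det2 y (mx2_act (mx2_conj M (rinv_mx r)) x) * det2 y (mx2_act (mx2_conj M (nrinv_mx r)) x).

Lemma qmap2_eqE p q : F2 q = F2 p <-> fiber_form (hom p) (hom q) = 0.
Proof.
rewrite /= !qmap_qmap // eq_proj ?qlift_neq0 ?hom_neq0 //.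
case: normal_mx_entries => Q11 Q12 Q21.
have K0 : mx2_det A * (2%:R * r * Q.1.1 * Q.2.1) * (2%:R * Q.1.1 * Q.2.1) != 0.
  by rewrite !mulf_neq0 ?pnatr_eq0 ?critval_mx_unit ?oppr_eq0 ?invr_eq0.
apply: (scaled_eq0 (expf_neq0 12 crit_mx_unit) K0).
rewrite (_ : 12 = 6 + 6)%N // exprD -det2_scale2 !qlift2_normal [in LHS]normal_mxE.
by rewrite det2_coalescing_iterate /fiber_form !det2_mx2_conj.
Qed.

Definition klein_mxs := [:: mx2_1; neg_mx; rinv_mx r; nrinv_mx r].

Lemma klein_mx_unit N : N \in klein_mxs -> mx2_det (mx2_conj M N) != 0.
Proof.
rewrite !inE => /or4P[]/eqP-> {N}; apply: conj_crit_unit.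
- exact: mx2_1_unit.
- exact: neg_mx_unit.
- exact: rinv_mx_unit coalescing_param_neq0.
- exact: nrinv_mx_unit coalescing_param_neq0.
Qed.

Lemma mob_conj_crit1 : mob (mx2_conj M mx2_1) =1 id.
Proof. by move=> p; apply: mob_conj_scalar crit_mx_unit (oner_neq0 _). Qed.

Lemma Deck_F2_klein N tau : N \in klein_mxs -> tau =1 mob (mx2_conj M N) -> Deck F2 tau.
Proof.
move=> hN; apply: Deck_mob (klein_mx_unit hN) _ => p; apply/qmap2_eqE.
have := det2_hom_mob p (klein_mx_unit hN).
by move: hN; rewrite /fiber_form !inE => /or4P[]/eqP-> ->; rewrite ?mulr0 ?mul0r.
Qed.

Lemma F2_invariant_mob m : mx2_det m != 0 -> (forall p, F2 (mob m p) = F2 p) ->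
  exists2 N, N \in klein_mxs & mob m =1 mob (mx2_conj M N).
Proof.
move=> m0 Fm; pose P N := det2_poly m (mx2_conj M N).
have P0 : P mx2_1 * P neg_mx * P (rinv_mx r) * P (nrinv_mx r) = 0.
  apply: poly_eq0_of_horner => z; rewrite !hornerM !horner_det2_poly.
  have [l l0 hl] := hom_proj (mx2_act_neq0 m0 (hom_neq0 (Some z))).
  have /qmap2_eqE := Fm (Some z); rewrite /fiber_form /mob hl !det2_scale2l /=.
  set a := det2 _ _; set b := det2 _ _; set c := det2 _ _; set d := det2 _ _.
  have -> : l * a * (l * b) * (l * c) * (l * d) = l ^+ 4 * (a * b * c * d) by ring.
  by move/eqP; rewrite mulf_eq0 expf_eq0 (negbTE l0) andbF => /eqP.
suff [N hN /det2_poly_eq0 PN0] : exists2 N, N \in klein_mxs & P N = 0.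
  by exists N => //; apply: mob_eq_of_det2 PN0 => //; exact: klein_mx_unit.
move/eqP: P0; rewrite !mulf_eq0 -!orbA => /or4P[]/eqP PN0; eexists; try exact: PN0.
all: by rewrite !inE eqxx ?orbT.
Qed.

Lemma Deck_F2 tau : Deck F2 tau <->
  (forall p, tau p = p) \/ (forall p, tau p = deck1 p) \/
  (forall p, tau p = deck2 p) \/ (forall p, tau p = deck3 p).
Proof.
split=> [[/is_mobiusP[m m0 tauE] Ftau]|].
  have [N hN mE] : exists2 N, N \in klein_mxs & mob m =1 mob (mx2_conj M N).
    by apply: F2_invariant_mob m0 _ => p; rewrite -tauE Ftau.
  move: hN; rewrite !inE => /or4P[]/eqP NE; rewrite NE in mE;
    [left|right; left|right; right; left|right; right; right] => p;
    by rewrite tauE mE ?mob_conj_crit1.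
case=> [tauE|[tauE|[tauE|tauE]]].
- by apply: (@Deck_F2_klein mx2_1); rewrite ?inE ?eqxx // => p; rewrite tauE mob_conj_crit1.
- by apply: (@Deck_F2_klein neg_mx); rewrite ?inE ?eqxx ?orbT.
- by apply: (@Deck_F2_klein (rinv_mx r)); rewrite ?inE ?eqxx ?orbT.
- by apply: (@Deck_F2_klein (nrinv_mx r)); rewrite ?inE ?eqxx ?orbT.
Qed.

Lemma adj_crit_qmap p : exists2 l, l != 0 &
  adjM (hom (qmap F p)) = scale2 l (mx2_act Q (sq2 (adjM (hom p)))).
Proof.
have [k k0 ->] := hom_proj (qlift_neq0 F_quadratic (hom_neq0 p)).
have d0 : mx2_det M ^+ 2 != 0 by rewrite expf_neq0 ?crit_mx_unit.
exists (k / mx2_det M ^+ 2); first by rewrite mulf_neq0 ?invr_eq0.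
by rewrite /normal_mx mx2_actM -qlift_normal !mx2_act_scale2 scale2A divfK.
Qed.

Lemma eq_c1 p : p = c1 <-> (adjM (hom p)).1 = 0.
Proof. by rewrite mx2_act_adj_cols eq_hom. Qed.

Lemma eq_c2 p : p = c2 <-> (adjM (hom p)).2 = 0.
Proof.
rewrite mx2_act_adj_cols eq_hom /=.
by split=> [->|/eqP]; rewrite ?oppr0 // oppr_eq0 => /eqP.
Qed.

Lemma qmap_eq_c1 p : qmap F p = c1 <-> (mx2_act Q (sq2 (adjM (hom p)))).1 = 0.
Proof.
rewrite eq_c1; have [l l0 ->] := adj_crit_qmap p.
by apply: (scaled_eq0 (oner_neq0 _) l0); rewrite mul1r.
Qed.

Lemma qmap_eq_c2 p : qmap F p = c2 <-> (mx2_act Q (sq2 (adjM (hom p)))).2 = 0.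
Proof.
rewrite eq_c2; have [l l0 ->] := adj_crit_qmap p.
by apply: (scaled_eq0 (oner_neq0 _) l0); rewrite mul1r.
Qed.

Lemma deck1_fixE p : deck1 p = p <-> p = c1 \/ p = c2.
Proof.
rewrite /deck1 mob_conj_fixE ?crit_mx_unit ?neg_mx_unit // eq_c1 eq_c2.
case: (adjM (hom p)) => w1 w2; rewrite /det2 /mx2_act /=.
rewrite (_ : _ - _ = 2%:R * (w1 * w2)); last by ring.
split=> [/eqP|[]->]; rewrite ?mul0r ?mulr0 //.
by rewrite !mulf_eq0 pnatr_eq0 /= => /orP[]/eqP; [left|right].
Qed.

Lemma deck2_fixE p : deck2 p = p <-> qmap F p = c1.
Proof.
have [Q11 _ _] := normal_mx_entries.
rewrite /deck2 mob_conj_fixE ?crit_mx_unit ?rinv_mx_unit ?coalescing_param_neq0 //.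
rewrite qmap_eq_c1 [in X in _ <-> X]normal_mxE; move: (Q.1.1) Q11 => a a0.
case: (adjM (hom p)) => w1 w2; rewrite /det2 /mx2_act /coalescing_mx /sq2 /=.
by apply: (scaled_eq0 a0 (oner_neq0 _)); ring.
Qed.

Lemma deck3_fixE p : deck3 p = p <-> qmap F p = c2.
Proof.
have [_ _ Q21] := normal_mx_entries.
rewrite /deck3 mob_conj_fixE ?crit_mx_unit ?nrinv_mx_unit ?coalescing_param_neq0 //.
rewrite qmap_eq_c2 [in X in _ <-> X]normal_mxE; move: (Q.2.1) Q21 => c c0.
case: (adjM (hom p)) => w1 w2; rewrite /det2 /mx2_act /coalescing_mx /sq2 /=.
by apply: (scaled_eq0 c0 (oner_neq0 _)); ring.
Qed.

Lemma deck1K : involutive deck1.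
Proof.
move=> p; rewrite /deck1 mob_conj_mul ?crit_mx_unit ?neg_mx_unit //.
rewrite (_ : mx2_mul _ _ = ((1, 0), (0, 1))).
  exact: mob_conj_scalar crit_mx_unit (oner_neq0 _).
by rewrite /mx2_mul /=; congr (_, _); congr (_, _); ring.
Qed.

Lemma deck2K : involutive deck2.
Proof.
move=> p; rewrite /deck2 mob_conj_mul ?crit_mx_unit ?rinv_mx_unit ?coalescing_param_neq0 //.
rewrite (_ : mx2_mul _ _ = ((r, 0), (0, r))).
  exact: mob_conj_scalar crit_mx_unit coalescing_param_neq0.
by rewrite /mx2_mul /=; congr (_, _); congr (_, _); ring.
Qed.

Lemma deck3K : involutive deck3.
Proof.
move=> p; rewrite /deck3 mob_conj_mul ?crit_mx_unit ?nrinv_mx_unit ?coalescing_param_neq0 //.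
rewrite (_ : mx2_mul _ _ = ((- r, 0), (0, - r))).
  by apply: mob_conj_scalar crit_mx_unit _; rewrite oppr_eq0 coalescing_param_neq0.
by rewrite /mx2_mul /=; congr (_, _); congr (_, _); ring.
Qed.

Lemma deck1_deck2 p : deck1 (deck2 p) = deck3 p.
Proof.
rewrite /deck1 mob_conj_mul ?crit_mx_unit ?rinv_mx_unit ?coalescing_param_neq0 //.
by rewrite /mx2_mul /=; congr (mob (mx2_conj _ (_, _)) p); congr (_, _); ring.
Qed.

Lemma deck1_nontrivial : exists p, deck1 p <> p.
Proof. by have [p [pc1 pc2]] := sphere_avoid2 c1 c2; exists p; rewrite deck1_fixE; case. Qed.

Lemma deck2_nontrivial : exists p, deck2 p <> p.
Proof.
have [Fc1|Fc1] := eqVneq (qmap F c1) c1.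
  by exists c2; rewrite deck2_fixE => Fc2; apply: F_c1_neq_c2; rewrite Fc1 Fc2.
by exists c1; rewrite deck2_fixE; apply/eqP.
Qed.

Lemma deck3_nontrivial : exists p, deck3 p <> p.
Proof.
have [Fc1|Fc1] := eqVneq (qmap F c1) c2.
  by exists c2; rewrite deck3_fixE => Fc2; apply: F_c1_neq_c2; rewrite Fc1 Fc2.
by exists c1; rewrite deck3_fixE; apply/eqP.
Qed.

End CriticallyCoalescing.

Theorem mainTheorem15 (R : realType) (F : qrat R) (c1 c2 : sphere R) :
  is_quadratic F ->
  (forall p, is_critical F p <-> p = c1 \/ p = c2) ->
  qmap F c1 <> qmap F c2 ->
  qmap F (qmap F c1) = qmap F (qmap F c2) ->
  exists s1 s2 s3 : sphere R -> sphere R,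
    (* Deck(f^2) = {id, s1, s2, s3} *)
    (forall tau, Deck (fun p => qmap F (qmap F p)) tau <->
       ((forall p, tau p = p) \/ (forall p, tau p = s1 p) \/
        (forall p, tau p = s2 p) \/ (forall p, tau p = s3 p))) /\
    (* the four elements are pairwise distinct and form a Klein four-group *)
    (exists p, s1 p <> p) /\ (exists p, s2 p <> p) /\ (exists p, s3 p <> p) /\
    (exists p, s1 p <> s2 p) /\ (exists p, s1 p <> s3 p) /\ (exists p, s2 p <> s3 p) /\
    (forall p, s1 (s1 p) = p) /\ (forall p, s2 (s2 p) = p) /\
    (forall p, s3 (s3 p) = p) /\ (forall p, s1 (s2 p) = s3 p) /\
    (* special pairs: fixed point sets of s1, s2, s3 *)
    (forall p, s1 p = p <-> p = c1 \/ p = c2) /\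
    (forall p, s2 p = p <-> qmap F p = c1) /\
    (forall p, s3 p = p <-> qmap F p = c2).
Proof.
move=> Fq Fcrit Fc12 F2c12.
have n1 := deck1_nontrivial Fc12.
have n2 := deck2_nontrivial Fq Fcrit Fc12 F2c12.
have n3 := deck3_nontrivial Fq Fcrit Fc12 F2c12.
have s1K := deck1K Fc12.
have s2K := deck2K Fq Fcrit Fc12 F2c12.
have s12 := deck1_deck2 Fq Fcrit Fc12 F2c12.
have [d12 d13 d23] := klein_four_distinct s1K s2K s12 n1 n2 n3.
exists (deck1 c1 c2), (deck2 F c1 c2), (deck3 F c1 c2).
split; first exact: Deck_F2 Fq Fcrit Fc12 F2c12.
do 8!split=> //; split; first exact: deck3K Fq Fcrit Fc12 F2c12.
split=> //; split; first exact: deck1_fixE Fc12.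
split; first exact: deck2_fixE Fq Fcrit Fc12 F2c12.
exact: deck3_fixE Fq Fcrit Fc12 F2c12.
Qed.
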